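(* Let $A=B[x;\alpha,\delta]_p$ be a Poisson polynomial algebra over a field $k$ of characteristic zero, and assume $\alpha\delta=\delta(\alpha+s)$ for some $s\in k$. Then for all $a,b\in B$ and $n\ge0$, $$\delta^n(\{a,b\})=\sum_{l+m=n}\binom{n}{l}\Big(\{\delta^l(a),\delta^m(b)\}+m\,\delta^l\alpha(a)\,\delta^m(b)-l\,\delta^l(a)\,\delta^m\alpha(b)\Big).$$
   Context: If $B$ is a Poisson algebra, $\alpha$ a Poisson derivation of $B$ and $\delta$ a derivation of $B$ with $\delta(\{a,b\})=\{\delta(a),b\}+\{a,\delta(b)\}+\alpha(a)\delta(b)-\delta(a)\alpha(b)$ for $a,b\in B$, then $B[x;\alpha,\delta]_p$ is $B[x]$ with the unique Poisson bracket extending that of $B$ with $\{x,b\}=\alpha(b)x+\delta(b)$. *)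

From HB Require Import structures.
From mathcomp Require Import all_boot all_order all_algebra.
Set Implicit Arguments. Unset Strict Implicit. Unset Printing Implicit Defensive.
Import GRing.Theory.
Local Open Scope ring_scope.

(* A Poisson algebra over k: a commutative k-algebra B with a k-bilinear
   Lie bracket (antisymmetric, Jacobi) that is a derivation in each argument
   (Leibniz rule in the second argument; the first follows by antisymmetry). *)
Definition is_poisson_bracket (k : fieldType) (B : comAlgType k)
    (br : B -> B -> B) : Prop :=
  [/\ (forall (c : k) (a a' b : B), br (c *: a + a') b = c *: br a b + br a' b),
      (forall (c : k) (a b b' : B), br a (c *: b + b') = c *: br a b + br a b'),
      (forall a b : B, br a b = - br b a),
      (forall a b c : B, br a (br b c) + br b (br c a) + br c (br a b) = 0) &
      (forall a b c : B, br a (b * c) = br a b * c + b * br a c)].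

Definition is_derivation (k : fieldType) (B : comAlgType k) (d : B -> B) : Prop :=
  (forall (c : k) (a b : B), d (c *: a + b) = c *: d a + d b) /\
  (forall a b : B, d (a * b) = d a * b + a * d b).

Definition is_poisson_derivation (k : fieldType) (B : comAlgType k)
    (br : B -> B -> B) (d : B -> B) : Prop :=
  is_derivation d /\ (forall a b : B, d (br a b) = br (d a) b + br a (d b)).

(* Hypotheses making B[x; alpha, delta]_p a Poisson polynomial algebra. *)
Definition poisson_poly_data (k : fieldType) (B : comAlgType k)
    (br : B -> B -> B) (alpha delta : B -> B) : Prop :=
  [/\ is_poisson_bracket br, is_poisson_derivation br alpha, is_derivation delta &
      forall a b : B, delta (br a b) =
        br (delta a) b + br a (delta b) + alpha a * delta b - delta a * alpha b].

From HB Require Import structures.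
From mathcomp Require Import all_boot all_order all_algebra.
From mathcomp Require Import ring zify.
Set Implicit Arguments. Unset Strict Implicit. Unset Printing Implicit Defensive.
Import GRing.Theory.
Local Open Scope ring_scope.

(* Writing T(l,m) for the (l,m) summand, the twisted Leibniz
   rule of delta on brackets together with
   alpha delta^l = delta^l alpha + l s delta^l gives
     delta T(l,m) = T(l+1,m) + T(l,m+1)
                    + s (l delta^l a delta^(m+1) b - m delta^(l+1) a delta^m b).
   Pascal's rule assembles the first two terms into the (n+1)-st identity, and
   the s-terms cancel in the binomial sum because l C(n,l) = (n-l+1) C(n,l-1). *)

Section BinomialSums.
Variables (R : pzRingType) (V : lmodType R).

Lemma sum_binom_pascal (f : nat -> nat -> V) n :
  \sum_(l < n.+2) 'C(n.+1, l)%:R *: f l (n.+1 - l)%N =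
  \sum_(l < n.+1) 'C(n, l)%:R *: (f l.+1 (n - l)%N + f l (n - l).+1).
Proof.
rewrite big_ord_recl /= subn0 bin0.
under eq_bigr => i _ do rewrite /bump /= add1n binS natrD scalerDl subSS.
rewrite big_split /=.
under [in RHS]eq_bigr => i _ do rewrite scalerDr.
rewrite big_split /= addrA [RHS]addrC; congr (_ + _).
rewrite [in RHS]big_ord_recl /= bin0 subn0.
rewrite [in LHS]big_ord_recr /= bin_small // scale0r addr0.
congr (_ + _); apply: eq_bigr => i _.
by rewrite /bump /= add1n (_ : (n - i.+1).+1 = n - i)%N //; have := ltn_ord i; lia.
Qed.

Lemma sum_binom_shift (f : nat -> nat -> V) n :
  \sum_(l < n.+1) 'C(n, l)%:R *: (l%:R *: f l (n - l).+1) =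
  \sum_(l < n.+1) 'C(n, l)%:R *: ((n - l)%:R *: f l.+1 (n - l)%N).
Proof.
rewrite big_ord_recl /= scale0r scaler0 add0r.
rewrite [in RHS]big_ord_recr /= subnn scale0r scaler0 addr0.
apply: eq_bigr => i _.
rewrite /bump /= add1n !scalerA -!natrM mulnC mul_bin_left mulnC.
by rewrite (_ : (n - i.+1).+1 = n - i)%N //; have := ltn_ord i; lia.
Qed.

End BinomialSums.

Section PoissonOreDerivation.
Variables (k : fieldType) (B : comAlgType k) (br : B -> B -> B).
Variables (alpha delta : B -> B) (s : k).
Hypothesis delta_linear : linear delta.
Hypothesis deltaM : forall a b : B, delta (a * b) = delta a * b + a * delta b.
Hypothesis delta_br : forall a b : B, delta (br a b) =
  br (delta a) b + br a (delta b) + alpha a * delta b - delta a * alpha b.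
Hypothesis alpha_delta : forall b : B, alpha (delta b) = delta (alpha b + s *: b).

HB.instance Definition _ :=
  GRing.isLinear.Build k B B *:%R delta delta_linear.

Lemma alpha_iter_delta l x :
  alpha (iter l delta x) = iter l delta (alpha x) + (s *: iter l delta x) *+ l.
Proof.
elim: l => [|l IHl]; first by rewrite addr0.
by rewrite !iterS alpha_delta IHl !linearD /= raddfMn /= !linearZ /= mulrSr addrA.
Qed.

Variables a b : B.

Definition bracket_summand l m :=
  br (iter l delta a) (iter m delta b)
  + m%:R *: (iter l delta (alpha a) * iter m delta b)
  - l%:R *: (iter l delta a * iter m delta (alpha b)).

Lemma delta_bracket_summand l m :
  delta (bracket_summand l m) =
  bracket_summand l.+1 m + bracket_summand l m.+1
  + s *: (l%:R *: (iter l delta a * iter m.+1 delta b)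
          - m%:R *: (iter l.+1 delta a * iter m delta b)).
Proof.
rewrite /bracket_summand !linearB !linearD !linearZ /= delta_br !deltaM.
rewrite (alpha_iter_delta l a) (alpha_iter_delta m b) -!iterS !scaler_nat.
(* [ring] does not handle the external k-action, so s is moved into B. *)
pose S : B := s%:A.
have sE x : s *: x = S * x by rewrite mulr_algl.
rewrite !sE; clearbody S.
ring.
Qed.

Lemma delta_sum_bracket_summands n :
  delta (\sum_(l < n.+1) 'C(n, l)%:R *: bracket_summand l (n - l)) =
  \sum_(l < n.+2) 'C(n.+1, l)%:R *: bracket_summand l (n.+1 - l).
Proof.
rewrite sum_binom_pascal linear_sum /=.
under eq_bigr => i _ do rewrite linearZ /= delta_bracket_summand scalerDr.
rewrite big_split /= -[RHS]addr0; congr (_ + _).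
under eq_bigr => i _ do rewrite scalerA mulrC -scalerA scalerBr.
rewrite -scaler_sumr sumrB.
by rewrite (sum_binom_shift (fun l m => iter l delta a * iter m delta b)) subrr scaler0.
Qed.

End PoissonOreDerivation.

Theorem lemma3p6 (k : fieldType) (B : comAlgType k) (br : B -> B -> B)
    (alpha delta : B -> B) (s : k) :
  [pchar k] =i pred0 ->
  poisson_poly_data br alpha delta ->
  (forall b : B, alpha (delta b) = delta (alpha b + s *: b)) ->
  forall (a b : B) (n : nat),
    iter n delta (br a b) =
    \sum_(l < n.+1)
      'C(n, l)%:R *: (br (iter l delta a) (iter (n - l) delta b)
        + (n - l)%:R *: (iter l delta (alpha a) * iter (n - l) delta b)
        - l%:R *: (iter l delta a * iter (n - l) delta (alpha b))).
Proof.
move=> _ [_ _ [delta_linear deltaM] delta_br] alpha_delta a b.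
elim=> [|n IHn]; first by rewrite big_ord1 /= !scale0r subr0 scale1r addr0.
rewrite iterS IHn.
exact: (delta_sum_bracket_summands delta_linear deltaM delta_br alpha_delta).
Qed.
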